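(* Let $n$ be a positive integer and $G$ a finite subgroup of $\mathrm{GL}_n(A)$, where $A=\mathbb{F}_q[t]$ and $q$ is a power of the prime $p$. Then the largest divisor of $\#G$ prime to $p$ divides $\prod_{s=1}^n(q^s-1)$. *)

From HB Require Import structures.
From mathcomp Require Import all_boot all_order all_algebra all_field.
From mathcomp Require Import finmap.
Set Implicit Arguments. Unset Strict Implicit. Unset Printing Implicit Defensive.
Import GRing.Theory.
Local Open Scope ring_scope.
Local Open Scope fset_scope.

Definition is_finite_subgroup_GL (F : fieldType) (n : nat)
  (G : {fset 'M[{poly F}]_n}) : Prop :=
  [/\ (1%:M : 'M[{poly F}]_n) \in G,
      (forall M, M \in G -> M \in unitmx),
      (forall M N, M \in G -> N \in G -> M *m N \in G) &
      (forall M, M \in G -> invmx M \in G)].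

From HB Require Import structures.
From mathcomp Require Import all_boot all_order all_algebra all_field all_fingroup all_solvable.
From mathcomp Require Import finmap.
Set Implicit Arguments. Unset Strict Implicit. Unset Printing Implicit Defensive.
Import GRing.Theory.
Local Open Scope fset_scope.

(* Reduction modulo t, i.e. evaluation at t = 0, maps G homomorphically into
   GL_n(F_q), and its kernel is a p-group: if x = 1 (mod t) has prime order
   q <> p, then (x - 1)(1 + x + ... + x^(q-1)) = 0 and the second factor
   reduces to the scalar q, so its determinant is nonzero and x = 1. Hence
   the p'-part of #G is that of a subgroup of GL_n(F_q), and
   #GL_n(F_q) = q^(n(n-1)/2) * prod_(s=1)^n (q^s - 1). *)

Section ReductionKernel.
Local Open Scope ring_scope.

Lemma map_mx_eq1_expr_eq1 (R : idomainType) (S : fieldType)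
    (f : {rmorphism R -> S}) m (A : 'M[R]_m.+1) q :
  q%:R != 0 :> S -> map_mx f A = 1 -> A ^+ q = 1 -> A = 1.
Proof.
move=> qS fA1 Aq1; set U := \sum_(i < q) A ^+ i.
have AU : (A - 1) * U = 0 by rewrite -subrX1 Aq1 subrr.
have fU : map_mx f U = q%:R%:M.
  rewrite raddf_sum /=.
  under eq_bigr => i _ do rewrite rmorphXn /= fA1 expr1n.
  by rewrite sumr_const card_ord raddfMn.
have detU : \det U != 0.
  apply: contraNneq (_ : \det (map_mx f U) != 0) => [dU0|].
    by rewrite det_map_mx dU0 rmorph0.
  by rewrite fU det_scalar expf_eq0.
have : (A - 1) *m (U *m \adj U) = 0 by rewrite mulmxA [_ *m U]AU mul0mx.
rewrite mul_mx_adj mul_mx_scalar => /eqP.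
by rewrite scalemx_eq0 (negbTE detU) subr_eq0 => /eqP.
Qed.

End ReductionKernel.

Section MorphimPart.
Local Open Scope group_scope.

Lemma card_morphim_p'part (aT rT : finGroupType) (D : {group aT})
    (f : {morphism D >-> rT}) p :
  p.-group ('ker f) -> ((#|D|)`_(p^') = (#|f @* D|)`_(p^'))%N.
Proof.
move=> pK; have sKD : 'ker f \subset D by apply/subsetP => x /dom_ker.
rewrite card_morphim setIid -{1}(Lagrange sKD) partnM ?cardG_gt0 ?indexg_gt0 //.
by rewrite part_p'nat ?mul1n // pnatNK.
Qed.

End MorphimPart.

Lemma p'part_card_GL_dvd (F : finFieldType) p n : p.-nat #|F| -> (0 < n)%N ->
  ((#|'GL_n[F]%g|)`_(p^') %| \prod_(1 <= s < n.+1) (#|F| ^ s - 1))%N.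
Proof.
move=> pF n_gt0; rewrite -(@Gauss_dvdr _ (#|F| ^ 'C(n, 2))) -?card_GL //.
  exact: dvdn_part.
by rewrite coprime_sym (pnat_coprime _ (part_pnat _ _)) // pnatX pF.
Qed.

Section FiniteSubgroupGL.
Local Open Scope ring_scope.
Variables (F : finFieldType) (n : nat) (G : {fset 'M[{poly F}]_n.+1}).
Hypothesis hG : is_finite_subgroup_GL G.

Definition subGL := fset_sub_type G.
HB.instance Definition _ := Finite.on subGL.

Let one_in : (1%:M : 'M[{poly F}]_n.+1) \in G.
Proof. by case: hG. Qed.
Let mul_in (x y : subGL) : val x *m val y \in G.
Proof. by case: hG => _ _ + _; apply; apply: valP. Qed.
Let inv_in (x : subGL) : invmx (val x) \in G.
Proof. by case: hG => _ _ _; apply; apply: valP. Qed.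
Let val_unitmx (x : subGL) : val x \in unitmx.
Proof. by case: hG => _ + _ _; apply; apply: valP. Qed.

Definition subGL_mul (x y : subGL) : subGL := [` mul_in x y].
Definition subGL_one : subGL := [` one_in].
Definition subGL_inv (x : subGL) : subGL := [` inv_in x].

Lemma subGL_mulA : associative subGL_mul.
Proof. by move=> x y z; apply: val_inj; rewrite /= mulmxA. Qed.
Lemma subGL_mul1 : left_id subGL_one subGL_mul.
Proof. by move=> x; apply: val_inj; rewrite /= mul1mx. Qed.
Lemma subGL_mulV : left_inverse subGL_one subGL_inv subGL_mul.
Proof. by move=> x; apply: val_inj; rewrite /= mulVmx ?val_unitmx. Qed.

HB.instance Definition _ :=
  Finite_isGroup.Build subGL subGL_mulA subGL_mul1 subGL_mulV.

Lemma card_subGL : #|[set: subGL]| = #|` G|.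
Proof. by rewrite cardsT cardfE. Qed.

Lemma val_subGL_expg (x : subGL) k : val (x ^+ k)%g = val x ^+ k.
Proof. by elim: k => // k IHk; rewrite expgS exprS -IHk. Qed.

Definition mx_eval0 (M : 'M[{poly F}]_n.+1) := map_mx (horner_eval 0) M.

Lemma mx_eval0_unit (x : subGL) : mx_eval0 (val x) \in unitmx.
Proof.
rewrite unitmxE /mx_eval0 det_map_mx /= horner_evalE horner_coef0 unitfE.
by have := val_unitmx x; rewrite unitmxE poly_unitE unitfE => /andP[].
Qed.

Definition subGL_eval0 (x : subGL) : {'GL_n.+1[F]} :=
  Sub (mx_eval0 (val x)) (mx_eval0_unit x).

Lemma subGL_eval0M : {in setT &, {morph subGL_eval0 : x y / (x * y)%g}}.
Proof. by move=> x y _ _; apply: val_inj; rewrite /= /mx_eval0 map_mxM. Qed.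

Canonical subGL_eval0_morphism := Morphism subGL_eval0M.

Lemma ker_subGL_eval0_pgroup p :
  p \in [pchar F] -> (p.-group ('ker subGL_eval0_morphism))%g.
Proof.
move=> pF; apply/pgroupP => q q_pr /Cauchy[] // x xK ox.
apply: contraT => qNp.
have qF : q%:R != 0 :> F.
  by rewrite -(dvdn_pcharf pF) (dvdn_prime2 (pcharf_prime pF) q_pr) eq_sym.
have x1 : x = 1%g.
  have x0 : mx_eval0 (val x) = 1%:M by move/(congr1 val): (mker xK).
  apply: val_inj; apply: (map_mx_eq1_expr_eq1 qF); first exact: x0.
  by rewrite -val_subGL_expg -ox expg_order.
by rewrite -ox x1 order1 in q_pr.
Qed.

End FiniteSubgroupGL.

Theorem lemma2p12 (F : finFieldType) (p k n : nat) (hp : prime p)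
  (hq : #|F| = (p ^ k)%N) (hn : (0 < n)%N)
  (G : {fset 'M[{poly F}]_n}) (hG : is_finite_subgroup_GL G) :
  ((#|` G|)`_(p^') %| \prod_(1 <= s < n.+1) (#|F| ^ s - 1))%N.
Proof.
case: n hn G hG => [//|n] _ G hG.
have pF := card_finPcharP hq hp.
rewrite -(card_subGL G) (card_morphim_p'part (ker_subGL_eval0_pgroup hG pF)).
have pnatF : p.-nat #|F| by rewrite hq pnatX pnat_id.
apply: dvdn_trans _ (p'part_card_GL_dvd pnatF (ltn0Sn n)).
exact: partn_dvd (cardG_gt0 _) (cardSg (subsetT _)).
Qed.
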